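(* Let $P:\mathcal{C}^{\mathrm{op}}\to\mathbf{Pos}$ be a universal slat-doctrine such that $\mathcal{C}$ has exponents. Then the unit $\iota:P\to P^{ex}$ of the existential completion preserves the universal structure: for all objects $A,B$ of $\mathcal{C}$, $\iota_A\circ\forall_{\mathrm{pr}_A}=\forall^{ex}_{\mathrm{pr}_A}\circ\iota_{A\times B}$ as maps $P(A\times B)\to P^{ex}(A)$, where $\mathrm{pr}_A:A\times B\to A$.
   Context: A slat-doctrine is a functor $P:\mathcal{C}^{\mathrm{op}}\to\mathbf{Pos}$ with $\mathcal{C}$ having finite products; $P_f$ is reindexing along $f$. It is universal if reindexing along each product projection has a right adjoint $\forall$ satisfying Beck–Chevalley (for every pullback of a projection $\mathrm{pr}:X\to A$ along $f:A'\to A$, with resulting projection $\mathrm{pr}'$ and $f':X'\to X$, $\forall_{\mathrm{pr}'}P_{f'}=P_f\forall_{\mathrm{pr}}$). Existential completion: $P^{ex}(A)$ is the poset (reflection) of triples $(A,B,\alpha)$, $\alpha\in P(A\times B)$, with $(A,B,\alpha)\le(A,C,\beta)$ iff some $f:A\times B\to C$ has $\alpha\le P_{\langle\mathrm{pr}_A,f\rangle}(\beta)$; $P^{ex}_f(C,D,\gamma)=(A,D,P_{f\times 1_D}(\gamma))$. When $P$ is universal and $\mathcal{C}$ has exponents, $P^{ex}$ is universal; $\forall^{ex}$ denotes the right adjoints of its reindexing along projections. The unit $\iota_A:P(A)\to P^{ex}(A)$ sends $\alpha$ to $(A,1,P_{\mathrm{pr}_A}(\alpha))$ with $\mathrm{pr}_A:A\times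 1\to A$. *)

(** Categories (hom-sets with Leibniz equality). [comp g f] is g ∘ f. *)
Record Category := {
  Obj :> Type;
  Hom : Obj -> Obj -> Type;
  idm : forall A, Hom A A;
  comp : forall {A B C}, Hom B C -> Hom A B -> Hom A C;
  comp_id_l : forall A B (f : Hom A B), comp (idm B) f = f;
  comp_id_r : forall A B (f : Hom A B), comp f (idm A) = f;
  comp_assoc : forall A B C D (f : Hom A B) (g : Hom B C) (h : Hom C D),
      comp h (comp g f) = comp (comp h g) f
}.
Arguments Hom {c} _ _.
Arguments idm {c} _.
Arguments comp {c A B C} _ _.

Record HasFiniteProducts (C : Category) := {
  term : Obj C;
  bang : forall A : Obj C, Hom A term;
  bang_uniq : forall (A : Obj C) (f g : Hom A term), f = g;
  prod : Obj C -> Obj C -> Obj C;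
  pr1 : forall {A B}, Hom (prod A B) A;
  pr2 : forall {A B}, Hom (prod A B) B;
  pair : forall {X A B}, Hom X A -> Hom X B -> Hom X (prod A B);
  pair_pr1 : forall X A B (f : Hom X A) (g : Hom X B), comp pr1 (pair f g) = f;
  pair_pr2 : forall X A B (f : Hom X A) (g : Hom X B), comp pr2 (pair f g) = g;
  pair_uniq : forall X A B (h : Hom X (prod A B)), pair (comp pr1 h) (comp pr2 h) = h
}.
Arguments term {C} _.
Arguments bang {C} _ _.
Arguments prod {C} _ _ _.
Arguments pr1 {C} _ {A B}.
Arguments pr2 {C} _ {A B}.
Arguments pair {C} _ {X A B} _ _.

Definition prod_map {C : Category} (FP : HasFiniteProducts C) {A A' B B' : Obj C}
  (f : Hom A A') (g : Hom B B') : Hom (prod FP A B) (prod FP A' B') :=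
  pair FP (comp f (pr1 FP)) (comp g (pr2 FP)).

Record HasExponents {C : Category} (FP : HasFiniteProducts C) := {
  exp : Obj C -> Obj C -> Obj C;  (* exp B D = D^B *)
  ev : forall {B D}, Hom (prod FP (exp B D) B) D;
  curry : forall {A B D}, Hom (prod FP A B) D -> Hom A (exp B D);
  curry_beta : forall A B D (f : Hom (prod FP A B) D),
      comp ev (prod_map FP (curry f) (idm B)) = f;
  curry_eta : forall A B D (g : Hom A (exp B D)),
      curry (comp ev (prod_map FP g (idm B))) = g
}.

Record Doctrine (C : Category) := {
  PT : Obj C -> Type;
  ple : forall {A}, PT A -> PT A -> Prop;
  ple_refl : forall A (x : PT A), ple x x;
  ple_trans : forall A (x y z : PT A), ple x y -> ple y z -> ple x z;
  ple_antisym : forall A (x y : PT A), ple x y -> ple y x -> x = y;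
  reidx : forall {A B}, Hom A B -> PT B -> PT A;
  reidx_mono : forall A B (f : Hom A B) (x y : PT B), ple x y -> ple (reidx f x) (reidx f y);
  reidx_id : forall A (x : PT A), reidx (idm A) x = x;
  reidx_comp : forall A B D (f : Hom A B) (g : Hom B D) (x : PT D),
      reidx (comp g f) x = reidx f (reidx g x)
}.
Arguments PT {C} _ _.
Arguments ple {C} _ {A} _ _.
Arguments reidx {C} _ {A B} _ _.

Section Universal.
Context {C : Category} (FP : HasFiniteProducts C) (P : Doctrine C).

Definition is_forall (fa : forall A B : Obj C, PT P (prod FP A B) -> PT P A) : Prop :=
  forall (A B : Obj C) (a : PT P (prod FP A B)) (b : PT P A),
    ple P (reidx P (pr1 FP) b) a <-> ple P b (fa A B a).

(** Beck–Chevalley for the pullback of pr_A : A×B -> A along f : A' -> A,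
    namely the square with pr_A' : A'×B -> A' and f×1_B : A'×B -> A×B. *)
Definition beck_chevalley (fa : forall A B : Obj C, PT P (prod FP A B) -> PT P A) : Prop :=
  forall (A A' B : Obj C) (f : Hom A' A) (a : PT P (prod FP A B)),
    fa A' B (reidx P (prod_map FP f (idm B)) a) = reidx P f (fa A B a).

Definition universal fa : Prop := is_forall fa /\ beck_chevalley fa.

(** Existential completion P^ex, presented by triples (A,B,α) as a preorder;
    P^ex(A) is its poset reflection, so equality there is mutual [Pex_le]. *)
Definition PexT (A : Obj C) : Type := { B : Obj C & PT P (prod FP A B) }.

Definition Pex_le {A : Obj C} (x y : PexT A) : Prop :=
  exists f : Hom (prod FP A (projT1 x)) (projT1 y),
    ple P (projT2 x) (reidx P (pair FP (pr1 FP) f) (projT2 y)).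

Definition Pex_eq {A : Obj C} (x y : PexT A) : Prop := Pex_le x y /\ Pex_le y x.

Definition Pex_reidx {A D : Obj C} (f : Hom A D) (x : PexT D) : PexT A :=
  existT _ (projT1 x) (reidx P (prod_map FP f (idm (projT1 x))) (projT2 x)).

Definition iota {A : Obj C} (a : PT P A) : PexT A :=
  existT _ (term FP) (reidx P (pr1 FP) a).

Definition is_forall_ex (fe : forall A B : Obj C, PexT (prod FP A B) -> PexT A) : Prop :=
  forall (A B : Obj C) (x : PexT (prod FP A B)) (y : PexT A),
    Pex_le (Pex_reidx (pr1 FP) y) x <-> Pex_le y (fe A B x).

End Universal.


(* Both inequalities come from the adjunctions.  For [ι(∀ a) ≤ ∀ex(ι a)], transpose
   along ∀ex: it reduces to the counit [P_pr(∀ a) ≤ a].  For the converse, let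
   [(D, d) = ∀ex(ι a)]; its counit says [d ≤ a] in [P((A×B)×D)] after reindexing.
   Since maps into [ι] of anything are plain inequalities, and by Beck–Chevalley
   [P_pr(∀ a)] in [P(A×D)] is the universal quantification of [a] reindexed to
   [(A×D)×B], the goal is that inequality reindexed along the
   canonical map [(A×D)×B → (A×B)×D].  Exponents are needed only for [∀ex] to exist;
   once [∀ex] is given the argument does not use them. *)

Section Products.
Context {C : Category} (FP : HasFiniteProducts C).

Lemma pair_ext {X A B : Obj C} (h k : Hom X (prod FP A B)) :
  comp (pr1 FP) h = comp (pr1 FP) k -> comp (pr2 FP) h = comp (pr2 FP) k -> h = k.
Proof.
  intros H1 H2.
  rewrite <- (pair_uniq _ FP _ _ _ h), <- (pair_uniq _ FP _ _ _ k), H1, H2.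
  reflexivity.
Qed.

Lemma pair_pr1_pr2 {A B : Obj C} : pair FP (pr1 FP) (pr2 FP) = idm (prod FP A B).
Proof.
  rewrite <- (pair_uniq _ FP _ _ _ (idm (prod FP A B))), !comp_id_r.
  reflexivity.
Qed.

Lemma pr1_prod_map {A A' B B' : Obj C} (f : Hom A A') (g : Hom B B') :
  comp (pr1 FP) (prod_map FP f g) = comp f (pr1 FP).
Proof. apply pair_pr1. Qed.

Definition prod_twist {A B D : Obj C} :
  Hom (prod FP (prod FP A D) B) (prod FP (prod FP A B) D) :=
  pair FP (prod_map FP (pr1 FP) (idm B)) (comp (pr2 FP) (pr1 FP)).

Lemma pr1_prod_twist {A B D : Obj C} :
  comp (pr1 FP) (@prod_twist A B D) = prod_map FP (pr1 FP) (idm B).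
Proof. apply pair_pr1. Qed.

Lemma prod_map_pr1_prod_twist {A B D : Obj C} :
  comp (prod_map FP (pr1 FP) (idm D)) (@prod_twist A B D) = pr1 FP.
Proof.
  unfold prod_map at 1, prod_twist.
  apply pair_ext; rewrite comp_assoc.
  - rewrite pair_pr1, <- comp_assoc, pair_pr1, pr1_prod_map. reflexivity.
  - rewrite pair_pr2, comp_id_l, pair_pr2. reflexivity.
Qed.

End Products.

Section ExistentialCompletion.
Context {C : Category} (FP : HasFiniteProducts C) (P : Doctrine C).

Lemma ple_reidx_precomp {X Y Z W : Obj C} (h : Hom W Z)
    (f : Hom Z X) (g : Hom Z Y) (f' : Hom W X) (g' : Hom W Y)
    (x : PT P X) (y : PT P Y) :
  comp f h = f' -> comp g h = g' ->
  ple P (reidx P f x) (reidx P g y) -> ple P (reidx P f' x) (reidx P g' y).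
Proof.
  intros <- <- Hxy.
  rewrite !(reidx_comp _ P).
  apply reidx_mono, Hxy.
Qed.

Lemma Pex_le_refl {A : Obj C} (x : PexT FP P A) : Pex_le FP P x x.
Proof.
  exists (pr2 FP).
  rewrite pair_pr1_pr2, reidx_id.
  apply ple_refl.
Qed.

(* A map into [ι a] is a map into the terminal object, hence carries no data. *)
Lemma Pex_le_iota {A : Obj C} (x : PexT FP P A) (a : PT P A) :
  Pex_le FP P x (iota FP P a) <-> ple P (projT2 x) (reidx P (pr1 FP) a).
Proof.
  split.
  - intros [f Hf]. cbn in Hf.
    rewrite <- (reidx_comp _ P), pair_pr1 in Hf.
    exact Hf.
  - intros Hx. exists (bang FP _). cbn.
    rewrite <- (reidx_comp _ P), pair_pr1.
    exact Hx.
Qed.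

End ExistentialCompletion.

Theorem lemma1 (C : Category) (FP : HasFiniteProducts C) (E : HasExponents FP)
  (P : Doctrine C)
  (fa : forall A B : Obj C, PT P (prod FP A B) -> PT P A)
  (Huniv : universal FP P fa)
  (fe : forall A B : Obj C, PexT FP P (prod FP A B) -> PexT FP P A)
  (Hfe : is_forall_ex FP P fe)
  (A B : Obj C) (a : PT P (prod FP A B)) :
  Pex_eq FP P (iota FP P (fa A B a)) (fe A B (iota FP P a)).
Proof.
  destruct Huniv as [Hfa Hbc].
  split.
  - apply Hfe, Pex_le_iota; cbn.
    rewrite <- (reidx_comp _ P), pr1_prod_map, (reidx_comp _ P).
    apply reidx_mono, Hfa, ple_refl.
  - pose proof (proj2 (Hfe _ _ _ _) (Pex_le_refl FP P (fe A B (iota FP P a))))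
      as counit.
    destruct (fe A B (iota FP P a)) as [D d].
    apply Pex_le_iota in counit; apply Pex_le_iota; cbn in counit |- *.
    rewrite <- Hbc.
    apply Hfa.
    exact (ple_reidx_precomp P (prod_twist FP) _ _ _ _ _ _
             (prod_map_pr1_prod_twist FP) (pr1_prod_twist FP) counit).
Qed.
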